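(* For every positive integer $\ell$, \[ \frac{\sum_{d\mid\ell}c_\ell(d)}{\nu(\ell)}\le \ell^{-\frac{\log(3/2)}{\log 2}}. \]
   Context: $\nu$ is the completely multiplicative function with $\nu(p)=p+1$ for primes $p$. The Chebyshev coefficients $c_{j,n}$ are defined by $x^n=\sum_{j=0}^n c_{j,n}U_j(x/2)$, with $U_j$ the Chebyshev polynomials of the second kind; for $d\mid\ell$, $c_\ell(d)=\prod_{p\mid\ell}c_{j_p,n_p}$ where $p^{j_p}\|d$, $p^{n_p}\|\ell$. *)

From Stdlib Require Import Reals.
From mathcomp Require Import all_boot.

Set Implicit Arguments.
Unset Strict Implicit.
Unset Printing Implicit Defensive.

Local Open Scope R_scope.

Fixpoint chebU (j : nat) (x : R) : R :=
  match j with
  | O => 1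
  | S O => (2 * x)
  | S ((S j') as j1) => (2 * x * chebU j1 x - chebU j' x)
  end.

Definition cheb_coeffs (c : nat -> nat -> R) : Prop :=
  forall (n : nat) (x : R),
    (x ^ n) = sum_f_R0 (fun j => (c j n * chebU j (x / 2))) n.

Definition sumR (s : seq R) : R := foldr Rplus 0 s.
Definition prodR (s : seq R) : R := foldr Rmult 1 s.

Definition nu (l : nat) : nat := (\prod_(p <- primes l) (p.+1 ^ logn p l))%N.

Definition c_l (c : nat -> nat -> R) (l d : nat) : R :=
  prodR [seq c (logn p d) (logn p l) | p <- primes l].

(* The recurrence x U_j(x/2) = U_{j+1}(x/2) + U_{j-1}(x/2) shows that the
   c_{j,n} are nonnegative integers with sum_j c_{j,n} <= 2^n.  Since c_l(d)
   factors over the primes of l, the divisor sum is multiplicative: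
   sum_{d | l} c_l(d) = prod_{p^k || l} sum_j c_{j,k} <= prod_{p^k || l} 2^k,
   whereas nu(l) = prod_{p^k || l} (p+1)^k and l^a = prod_{p^k || l} p^{ka}
   for a = log 3/2 / log 2.  So everything reduces to 2 p^a <= p + 1 for
   p >= 2, which is an equality at p = 2. *)

From Stdlib Require Import Reals Lra.
From mathcomp Require Import all_boot all_order all_algebra.
From mathcomp Require Import Rstruct.
Import Order.TTheory GRing.Theory Num.Theory.

Set Implicit Arguments.
Unset Strict Implicit.

Local Open Scope ring_scope.

Section ChebyshevPolynomials.
Variable A : nzRingType.

(* [chebUp j] is the polynomial U_j(X/2). *)
Fixpoint chebUp (j : nat) : {poly A} :=
  match j with
  | 0 => 1
  | 1 => 'X
  | (j'.+1 as j1).+1 => 'X * chebUp j1 - chebUp j'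
  end.

Lemma size_lead_coef_chebUp j :
  size (chebUp j) = j.+1 /\ lead_coef (chebUp j) = 1.
Proof.
suff [] : (size (chebUp j) = j.+1 /\ lead_coef (chebUp j) = 1) /\
          (size (chebUp j.+1) = j.+2 /\ lead_coef (chebUp j.+1) = 1) by [].
elim: j => [|j [[sz0 lc0] [sz1 lc1]]].
  by rewrite size_poly1 lead_coef1 size_polyX lead_coefX.
have nz1 : chebUp j.+1 != 0 by rewrite -size_poly_gt0 sz1.
have szX : size ('X * chebUp j.+1) = j.+3 by rewrite -commr_polyX size_mulX // sz1.
have lt_sz : (size (- chebUp j) < size ('X * chebUp j.+1)%R)%N.
  by rewrite size_polyN sz0 szX.
split; first by [].
by rewrite /= size_polyDl // lead_coefDl // szX -commr_polyX lead_coefMX lc1.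
Qed.

Lemma size_chebUp j : size (chebUp j) = j.+1.
Proof. by case: (size_lead_coef_chebUp j). Qed.

Lemma coef_chebUp_self j : (chebUp j)`_j = 1.
Proof. by case: (size_lead_coef_chebUp j) => sz <-; rewrite lead_coefE sz. Qed.

Lemma mulX_chebUp j :
  'X * chebUp j = chebUp j.+1 + (if j is j'.+1 then chebUp j' else 0).
Proof. by case: j => [|j]; rewrite /= ?mulr1 ?addr0 ?subrK. Qed.

Lemma coef_sum_chebUp n (a : nat -> A) :
  (\sum_(j < n.+1) a j *: chebUp j)`_n = a n.
Proof.
rewrite coef_sum big_ord_recr /= coefZ coef_chebUp_self mulr1.
rewrite big1 ?add0r // => j _.
by rewrite coefZ nth_default ?mulr0 // size_chebUp.
Qed.

Lemma sum_chebUp_eq0 n (a : nat -> A) :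
  \sum_(j < n.+1) a j *: chebUp j = 0 -> forall j, (j <= n)%N -> a j = 0.
Proof.
elim: n => [|n IH] sum0 j le_jn.
  by move: le_jn; rewrite leqn0 => /eqP ->; rewrite -(coef_sum_chebUp 0 a) sum0 coef0.
have an : a n.+1 = 0 by rewrite -coef_sum_chebUp sum0 coef0.
move: le_jn; rewrite leq_eqVlt => /orP[/eqP -> // | lt_jn].
by apply: IH; move: sum0; rewrite big_ord_recr /= an scale0r addr0.
Qed.

Fixpoint cheb_coef (n j : nat) : nat :=
  if n is n'.+1 then (if j is j'.+1 then cheb_coef n' j' else 0) + cheb_coef n' j.+1
  else (j == 0)%N.

Lemma cheb_coefS n j :
  cheb_coef n.+1 j = ((if j is j'.+1 then cheb_coef n j' else 0) + cheb_coef n j.+1)%N.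
Proof. by []. Qed.

Lemma cheb_coef_gt n j : (n < j)%N -> cheb_coef n j = 0%N.
Proof.
elim: n j => [|n IH] [|j] //= lt_nj.
by rewrite ltnS in lt_nj; rewrite !IH // ltnW // ltnW.
Qed.

Lemma sum_cheb_coef_le n m : (\sum_(j < m) cheb_coef n j <= 2 ^ n)%N.
Proof.
elim: n m => [|n IH] m.
  case: m => [|m]; first by rewrite big_ord0.
  by rewrite big_ord_recl big1.
rewrite /= big_split /= expnS mul2n -addnn.
apply: leq_add.
  by case: m => [|m]; rewrite ?big_ord0 // big_ord_recl add0n IH.
by apply: leq_trans (IH m.+1); rewrite big_ord_recl leq_addl.
Qed.

Lemma Xn_chebUp n : 'X^n = \sum_(j < n.+1) chebUp j *+ cheb_coef n j.
Proof.
elim: n => [|n IH]; first by rewrite big_ord_recl big_ord0 expr0 addr0.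
rewrite exprS IH mulr_sumr.
under eq_bigr => j _ do rewrite mulrnAr mulX_chebUp mulrnDl.
under [RHS]eq_bigr => j _ do rewrite cheb_coefS mulrnDr.
rewrite !big_split; congr (_ + _).
  by rewrite [RHS]big_ord_recl /= add0r.
rewrite [LHS]big_ord_recl /= mul0rn add0r.
by rewrite (big_ord_recr n.+1) (big_ord_recr n) /= !cheb_coef_gt // !mulr0n !addr0.
Qed.
End ChebyshevPolynomials.

Lemma poly_eq0_horner (R : numDomainType) (p : {poly R}) :
  (forall x, p.[x] = 0) -> p = 0.
Proof.
move=> p0; apply/eqP; apply: contraT => nz_p.
pose rs : seq R := [seq i%:R | i <- iota 0 (size p)].
have := max_poly_roots nz_p (rs := rs).
rewrite size_map size_iota ltnn; apply.
  by apply/allP => x _; apply/rootP.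
by rewrite map_inj_uniq ?iota_uniq // => i k /eqP; rewrite eqr_nat => /eqP.
Qed.

Section RealChebyshev.
Local Open Scope R_scope.

Lemma horner_chebUp j (x : R) : (chebUp R j).[x] = chebU j (x / 2).
Proof.
have half2 (y : R) : y = 2 * (y / 2) by field.
suff [] : (chebUp R j).[x] = chebU j (x / 2) /\
          (chebUp R j.+1).[x] = chebU j.+1 (x / 2) by [].
elim: j => [|j [IH0 IH1]]; first by rewrite hornerC hornerX; split; last exact: half2.
split=> //.
by rewrite /= hornerD hornerN mulrC hornerMX IH0 IH1 /= mulrC -half2.
Qed.

End RealChebyshev.

Lemma cheb_coeffsE (c : nat -> nat -> R) : cheb_coeffs c ->
  forall n j, (j <= n)%N -> c j n = (cheb_coef n j)%:R.
Proof.
move=> hc n j le_jn; apply/eqP; rewrite -subr_eq0; apply/eqP; move: j le_jn.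
apply: (sum_chebUp_eq0 (a := fun j => c j n - (cheb_coef n j)%:R)).
apply: poly_eq0_horner => x.
rewrite horner_sum.
under eq_bigr => j _ do rewrite hornerZ horner_chebUp mulrBl.
rewrite sumrB.
have := hc n x; rewrite sum_f_R0E big_mkord RpowE => <-.
rewrite -hornerXn Xn_chebUp horner_sum.
under eq_bigr => j _ do rewrite hornerMn horner_chebUp -mulr_natl.
by rewrite subrr.
Qed.

Definition cheb_sum (c : nat -> nat -> R) (k : nat) : R := \sum_(j < k.+1) c j k.

Lemma cheb_sumE (c : nat -> nat -> R) k : cheb_coeffs c ->
  cheb_sum c k = (\sum_(j < k.+1) cheb_coef k j)%:R.
Proof.
move=> hc; rewrite natr_sum; apply: eq_bigr => j _.
by rewrite (cheb_coeffsE hc) // -ltnS.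
Qed.

Lemma cheb_sum_ge0 (c : nat -> nat -> R) k : cheb_coeffs c -> 0 <= cheb_sum c k.
Proof. by move=> hc; rewrite (cheb_sumE _ hc). Qed.

Lemma cheb_sum_le (c : nat -> nat -> R) k : cheb_coeffs c -> cheb_sum c k <= 2 ^+ k.
Proof. by move=> hc; rewrite (cheb_sumE _ hc) -natrX ler_nat sum_cheb_coef_le. Qed.

Section RealExponent.
Local Open Scope R_scope.

Definition log2_three_halves : R := ln (3 / 2) / ln 2.

Lemma ln2_gt0 : 0 < ln 2.
Proof. by have := ln_lt_2; lra. Qed.

Lemma Rpower2_log2_three_halves : Rpower 2 log2_three_halves = 3 / 2.
Proof.
have ln2_neq0 := ln2_gt0.
rewrite /Rpower /log2_three_halves.
by replace (ln (3 / 2) / ln 2 * ln 2) with (ln (3 / 2)) by (field; lra); rewrite exp_ln; lra.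
Qed.

Lemma log2_three_halves_le_two_thirds : log2_three_halves <= 2 / 3.
Proof.
have ln2_pos := ln2_gt0.
have : ln ((3 / 2) ^ 3) <= ln (2 ^ 2) by apply: Rlt_le; apply: ln_increasing; lra.
rewrite !ln_pow; try lra; rewrite /log2_three_halves /= => H.
by apply: (Rmult_le_reg_r (ln 2)) => //; field_simplify; lra.
Qed.

Lemma double_Rpower_le_succ x : 2 <= x -> 2 * Rpower x log2_three_halves <= x + 1.
Proof.
move=> x_ge2; set t := x / 2.
have t_ge1 : 1 <= t by rewrite /t; lra.
have -> : x = 2 * t by rewrite /t; field.
rewrite -Rpower_mult_distr; try lra.
rewrite Rpower2_log2_three_halves.
have le_pow : Rpower t log2_three_halves <= Rpower t (2 / 3).
  by apply: Rle_Rpower => //; apply: log2_three_halves_le_two_thirds.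
(* With s the cube root of t, the claim reduces to 3 s^2 <= 2 s^3 + 1, i.e. (s-1)^2 (2s+1) >= 0. *)
set s := Rpower t (1 / 3).
have s_ge1 : 1 <= s.
  by rewrite -(Rpower_O t); [apply: Rle_Rpower => //; lra | lra].
have t2E : Rpower t (2 / 3) = s * s by rewrite /s -Rpower_plus; f_equal; field.
have tE : t = s * s * s.
  rewrite /s -!Rpower_plus -{1}(Rpower_1 t); last lra.
  by f_equal; field.
have : 0 <= (s - 1) * (s - 1) * (2 * s + 1) by apply: Rmult_le_pos; nra.
rewrite t2E in le_pow; clearbody s t; subst t; nra.
Qed.

End RealExponent.

Section PrimePowerSplitting.
Local Open Scope nat_scope.
Variables (p m : nat).
Hypotheses (p_pr : prime p) (m_gt0 : 0 < m) (p_ndvd_m : ~~ (p %| m)).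

Let pX_gt0 i : 0 < p ^ i. Proof. by rewrite expn_gt0 prime_gt0. Qed.

Lemma primes_expnM k : perm_eq (primes (p ^ k.+1 * m)) (p :: primes m).
Proof.
have pm_gt0 : 0 < p ^ k.+1 * m by rewrite muln_gt0 pX_gt0.
apply: uniq_perm; first exact: primes_uniq.
  by rewrite /= primes_uniq andbT mem_primes p_pr m_gt0.
move=> q; rewrite in_cons !mem_primes pm_gt0 m_gt0 /=.
apply/idP/idP.
  case/andP=> q_pr; rewrite Euclid_dvdM // Euclid_dvdX // andbT.
  case/orP=> [q_dvd_p|->]; last by rewrite q_pr orbT.
  by rewrite -(dvdn_prime2 q_pr p_pr) q_dvd_p.
case/orP=> [/eqP->|/andP[q_pr q_dvd_m]]; first by rewrite p_pr dvdn_mulr // dvdn_exp.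
by rewrite q_pr dvdn_mull.
Qed.

Lemma logn_expnM_neq q i e : q != p -> 0 < e -> logn q (p ^ i * e) = logn q e.
Proof.
move=> q_neq_p e_gt0.
rewrite lognM // lognX logn_prime //.
by rewrite (negbTE q_neq_p) muln0.
Qed.

Lemma logn_expnM_eq i e : 0 < e -> ~~ (p %| e) -> logn p (p ^ i * e) = i.
Proof.
move=> e_gt0 p_ndvd_e.
rewrite lognM // pfactorK //.
by rewrite lognE p_pr e_gt0 (negbTE p_ndvd_e) addn0.
Qed.

Lemma divisor_gt0_ndvd e : e \in divisors m -> 0 < e /\ ~~ (p %| e).
Proof.
rewrite -dvdn_divisors // => e_dvd_m; split; first exact: dvdn_gt0 e_dvd_m.
by apply: contra p_ndvd_m => /dvdn_trans; apply.
Qed.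

Lemma mem_primes_neq q : q \in primes m -> q != p.
Proof. by apply: contraTneq => ->; rewrite mem_primes p_pr m_gt0. Qed.

Lemma divisors_expnM k :
  perm_eq (divisors (p ^ k * m)) [seq p ^ i * e | i <- iota 0 k.+1, e <- divisors m].
Proof.
have pm_gt0 : 0 < p ^ k * m by rewrite muln_gt0 pX_gt0.
apply: uniq_perm; first exact: divisors_uniq.
  apply: allpairs_uniq; [exact: iota_uniq | exact: divisors_uniq|].
  move=> [i e] [i' e'] /allpairsP[[x y] [_ y_dvd [-> ->]]].
  move=> /allpairsP[[x' y'] [_ y'_dvd [-> ->]]] /= eq_xy.
  have [y_gt0 p_ndvd_y] := divisor_gt0_ndvd y_dvd.
  have [y'_gt0 p_ndvd_y'] := divisor_gt0_ndvd y'_dvd.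
  have eq_x : x = x'.
    by rewrite -(logn_expnM_eq x y_gt0 p_ndvd_y) eq_xy logn_expnM_eq.
  by move: eq_xy; rewrite -eq_x => /eqP; rewrite eqn_pmul2l // => /eqP ->.
move=> d; rewrite -dvdn_divisors //; apply/idP/allpairsP => [d_dvd|].
  have d_gt0 : 0 < d by apply: dvdn_gt0 d_dvd.
  have [e cop_pe de] := pfactor_coprime p_pr d_gt0.
  exists (logn p d, e); split.
  - rewrite mem_iota add0n ltnS -(logn_expnM_eq k m_gt0 p_ndvd_m).
    exact: dvdn_leq_log.
  - rewrite -dvdn_divisors // -(@Gauss_dvdl _ _ (p ^ k)) ?coprimeXr 1?coprime_sym //.
    by rewrite /= mulnC; apply: dvdn_trans d_dvd; rewrite de dvdn_mulr.
  - by rewrite {1}de mulnC.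
move=> [[i e] [i_le e_dvd ->]].
rewrite mem_iota add0n ltnS in i_le; rewrite -dvdn_divisors // in e_dvd.
by apply: dvdn_mul; first exact: dvdn_exp2l.
Qed.

Lemma nu_expnM k : nu (p ^ k.+1 * m) = p.+1 ^ k.+1 * nu m.
Proof.
rewrite /nu (perm_big _ (primes_expnM k)) big_cons logn_expnM_eq //.
congr (_ * _); apply: eq_big_seq => q q_in.
by rewrite logn_expnM_neq // mem_primes_neq.
Qed.

End PrimePowerSplitting.

Lemma nu_gt0 l : (0 < nu l)%N.
Proof. by rewrite /nu prodn_gt0 // => q; rewrite expn_gt0. Qed.

Lemma sumR_map (f : nat -> R) (s : seq nat) :
  sumR [seq f x | x <- s] = \sum_(x <- s) f x.
Proof. by elim: s => [|x s IH]; rewrite ?big_nil ?big_cons //= IH. Qed.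

Lemma prodR_map (f : nat -> R) (s : seq nat) :
  prodR [seq f x | x <- s] = \prod_(x <- s) f x.
Proof. by elim: s => [|x s IH]; rewrite ?big_nil ?big_cons //= IH. Qed.

Definition divisor_sum (c : nat -> nat -> R) (l : nat) : R :=
  \sum_(d <- divisors l) c_l c l d.

Lemma c_l_ge0 (c : nat -> nat -> R) l d : cheb_coeffs c -> (0 < l)%N ->
  d \in divisors l -> 0 <= c_l c l d.
Proof.
move=> hc l_gt0; rewrite -dvdn_divisors // => d_dvd.
rewrite /c_l prodR_map; apply: prodr_ge0 => q _.
by rewrite (cheb_coeffsE hc) ?dvdn_leq_log.
Qed.

Lemma divisor_sum_ge0 (c : nat -> nat -> R) l : cheb_coeffs c -> (0 < l)%N ->
  0 <= divisor_sum c l.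
Proof. by move=> hc l_gt0; rewrite /divisor_sum big_seq; apply: sumr_ge0 => d; apply: c_l_ge0. Qed.

Section DivisorSumSplitting.
Variables (c : nat -> nat -> R) (p m : nat).
Hypotheses (p_pr : prime p) (m_gt0 : (0 < m)%N) (p_ndvd_m : ~~ (p %| m)%N).

Lemma c_l_expnM k i e : e \in divisors m ->
  c_l c (p ^ k.+1 * m) (p ^ i * e) = c i k.+1 * c_l c m e.
Proof.
move=> /(divisor_gt0_ndvd m_gt0 p_ndvd_m) [e_gt0 p_ndvd_e].
rewrite /c_l !prodR_map (perm_big _ (primes_expnM p_pr m_gt0 p_ndvd_m k)).
rewrite big_cons !logn_expnM_eq //; congr (_ * _).
apply: eq_big_seq => q /(mem_primes_neq p_pr m_gt0 p_ndvd_m) q_neq_p.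
by rewrite !logn_expnM_neq.
Qed.

Lemma divisor_sum_expnM k :
  divisor_sum c (p ^ k.+1 * m) = cheb_sum c k.+1 * divisor_sum c m.
Proof.
rewrite /divisor_sum (perm_big _ (divisors_expnM p_pr m_gt0 p_ndvd_m k.+1)).
rewrite big_allpairs_dep /cheb_sum -(big_mkord xpredT (fun j => c j k.+1)) big_distrl /=.
apply: eq_bigr => i _; rewrite big_distrr /=.
by apply: eq_big_seq => e e_dvd; apply: c_l_expnM.
Qed.

End DivisorSumSplitting.

Section MainInequality.
Local Open Scope R_scope.

Lemma Rdiv_le_inv x y z : 0 < y -> 0 < z -> x * z <= y -> x / y <= / z.
Proof.
move=> y_gt0 z_gt0 le_xz_y; apply: (Rmult_le_reg_r (y * z)); first exact: Rmult_lt_0_compat.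
have -> : x / y * (y * z) = x * z by field; lra.
by have -> : / z * (y * z) = y by field; lra.
Qed.

Lemma INR_expn p k : INR (p ^ k)%N = INR p ^ k.
Proof. by elim: k => [|k IH]; rewrite ?expnS ?mult_INR ?IH. Qed.

Lemma Rpower_pow_l x k a : 0 < x -> Rpower (x ^ k) a = Rpower x a ^ k.
Proof.
move=> x_gt0.
by rewrite -Rpower_pow // Rpower_mult Rmult_comm -Rpower_mult Rpower_pow // /Rpower; apply: exp_pos.
Qed.

Lemma cheb_sum_Rpower_le (c : nat -> nat -> R) k x : cheb_coeffs c -> 2 <= x ->
  cheb_sum c k * Rpower x log2_three_halves ^ k <= (x + 1) ^ k.
Proof.
move=> hc x_ge2.
have pow_ge0 : 0 <= Rpower x log2_three_halves ^ k by apply: pow_le; apply: Rlt_le; apply: exp_pos.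
apply: (Rle_trans _ ((2 * Rpower x log2_three_halves) ^ k)).
  rewrite Rpow_mult_distr; apply: Rmult_le_compat_r => //.
  by rewrite RpowE; apply/RleP; apply: cheb_sum_le.
apply: pow_incr; split; last exact: double_Rpower_le_succ.
by apply: Rmult_le_pos; [lra | apply: Rlt_le; apply: exp_pos].
Qed.

Lemma divisor_sum_Rpower_le (c : nat -> nat -> R) l : cheb_coeffs c -> (0 < l)%N ->
  divisor_sum c l * Rpower (INR l) log2_three_halves <= INR (nu l).
Proof.
move=> hc; elim/ltn_ind: l => l IH l_gt0.
have [l_le1 | l_gt1] := leqP l 1.
  have -> : l = 1%N by apply/eqP; rewrite eqn_leq l_le1 l_gt0.
  rewrite /divisor_sum /= big_cons big_nil /c_l /nu /= big_nil.
  by rewrite /Rpower ln_1 Rmult_0_r exp_0 /= GRing.addr0; lra.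
pose p := pdiv l; have p_pr : prime p := pdiv_prime l_gt1.
have [m cop_pm lE] := pfactor_coprime p_pr l_gt0.
have : (0 < logn p l)%N by rewrite logn_gt0 mem_primes p_pr l_gt0 pdiv_dvd.
move: lE; case: (logn p l) => [//|k] lE _.
have m_gt0 : (0 < m)%N by move: l_gt0; rewrite lE muln_gt0 => /andP[].
have p_ndvd_m : ~~ (p %| m)%N by rewrite -prime_coprime.
have m_lt_l : (m < l)%N.
  by rewrite lE -{1}(muln1 m) ltn_mul2l m_gt0 (leq_ltn_trans _ (ltn_expl k.+1 (prime_gt1 p_pr))).
have p_ge2 : 2 <= INR p by have := le_INR 2 p (elimT ssrnat.leP (prime_gt1 p_pr)); rewrite /=; lra.
have m_gt0R : 0 < INR m by apply: lt_0_INR; apply/ssrnat.ltP.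
have pk_gt0 : 0 < INR p ^ k.+1 by apply: pow_lt; lra.
have Rpower_ge0 x : 0 <= Rpower x log2_three_halves by apply: Rlt_le; apply: exp_pos.
rewrite lE mulnC divisor_sum_expnM // nu_expnM // !mult_INR !INR_expn S_INR.
rewrite -Rpower_mult_distr // Rpower_pow_l; last lra.
set A := cheb_sum c k.+1; set F := divisor_sum c m.
set P := Rpower (INR p) _; set M := Rpower (INR m) _.
have -> : A * F * (P ^ k.+1 * M) = A * P ^ k.+1 * (F * M) by ring.
apply: Rmult_le_compat; last exact: IH.
- by apply: Rmult_le_pos; [apply/RleP; apply: cheb_sum_ge0 | apply/pow_le/Rpower_ge0].
- by apply: Rmult_le_pos; [apply/RleP; apply: divisor_sum_ge0 | apply: Rpower_ge0].
- exact: cheb_sum_Rpower_le.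
Qed.

End MainInequality.

Local Open Scope R_scope.

Theorem lemma6p3 (c : nat -> nat -> R) (hc : cheb_coeffs c) (l : nat) (hl : (0 < l)%N) :
  (sumR [seq c_l c l d | d <- divisors l] / INR (nu l) <=
   Rpower (INR l) (- (ln (3 / 2) / ln 2))).
Proof.
rewrite sumR_map -/(divisor_sum c l) Rpower_Ropp.
apply: Rdiv_le_inv; last exact: divisor_sum_Rpower_le.
- by apply: lt_0_INR; apply/ssrnat.ltP; apply: nu_gt0.
- exact: exp_pos.
Qed.
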